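(* The map $\omega:(\Xi,d')\to(\Xi,d')$, $\omega([(L,v)])=[(\omega(L),v)]$, is continuous.
   Context: Combinatorial tiling: 2-dimensional CW-complex homeomorphic to the open unit disk. Decorated subdivision: a decorated pentagon has boundary vertices $v_1,\dots,v_5$ in cyclic order (indices mod 5), corner $v_i$ labelled $i$; $\omega$ adds $m_i$ inside edge $v_iv_{i+1}$, interior vertices $c_1,\dots,c_5$, edges $c_ic_{i+1}$, $c_im_i$, and replaces the face by the central pentagon $c_1\cdots c_5$ (label $i+1$ at $c_i$) and petals $v_i\,m_i\,c_i\,c_{i-1}\,m_{i-1}$ labelled $i,i+1,i+2,i+3,i+4$ (mod 5). $K_0$ is one decorated pentagon, $K_n=\omega^n(K_0)$ embeds label-preservingly onto the central superpentagon $\omega^n(\text{central face of }\omega(K_0))$ of $K_{n+1}$, and $K$ is the direct limit. Isomorphisms are cell-preserving label-preserving bijections. A patch is a finite subcomplex that is a union of faces connected through chains of faces sharing edges. $L$ is locally isomorphic to $K$ if every patch of $L$ is isomorphic to a patch of $K$. $\Xi$ is the set of isomorphism classes $[(L,v)]$ with $L$ locally isomorphic to $K$ and $v$ a vertex of $L$; $\omega(L)$ applies $\omega$ to every face of $L$. $B(v,n,L)$ is the subcomplex of faces all of whose vertices are at edge-path distance $\le n$ from $v$. $d'([(L,v)],[(L',v')])=\min(1/n,1)$ with $n$ the greatest radius such that some isomorphism $B(v,n,L)\to B(v',n,L')$ sends $v$ to $v'$ ($d'=0$ if for all $n$). *)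

From HB Require Import structures.
From mathcomp Require Import all_boot all_order all_algebra.
From mathcomp Require Import boolp classical_sets cardinality reals.
From Stdlib Require Import Relations.Relation_Operators.

Set Implicit Arguments.
Unset Strict Implicit.
Unset Printing Implicit Defensive.
Import Order.TTheory GRing.Theory Num.Theory.
Local Open Scope classical_set_scope.
Local Open Scope ring_scope.

(* A complex has a carrier type of (potential) vertices and a set of    *)
(* faces.  A face is a function t : 'I_5 -> vert: t k is the corner      *)
(* labelled k+1, and the boundary of the face is the cycle              *)
(* t 0, t 1, t 2, t 3, t 4 (indices taken mod 5, i.e. in 'Z_5).          *)
(* The vertices of the complex are the elements occurring in faces;     *)
(* other elements of the carrier are ignored.  Edges are the pairs of   *)
(* cyclically consecutive corners of faces.                             *)
Record cplx := Cplx { vert : Type; face : set ('I_5 -> vert) }.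
Arguments face : clear implicits.

Definition ftype (L : cplx) := 'I_5 -> vert L.

Definition is_vert (L : cplx) (x : vert L) : Prop :=
  exists t : ftype L, exists i, face L t /\ t i = x.

Definition adj (L : cplx) (x y : vert L) : Prop :=
  exists t : ftype L, exists i : 'I_5, face L t /\
    ((t i = x /\ t (i + 1) = y) \/ (t i = y /\ t (i + 1) = x)).

Fixpoint is_path (L : cplx) (x : vert L) (s : seq (vert L)) : Prop :=
  match s with
  | [::] => True
  | y :: s' => adj x y /\ is_path y s'
  end.

Definition within (L : cplx) (v : vert L) (n : nat) (w : vert L) : Prop :=
  exists s, is_path v s /\ (size s <= n)%N /\ last v s = w.

Definition corner (L : cplx) (v : vert L) (c : ftype L * 'I_5) : Prop :=
  face L c.1 /\ c.1 c.2 = v.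

Definition cnbr (L : cplx) (c : ftype L * 'I_5) (w : vert L) : Prop :=
  c.1 (c.2 + 1) = w \/ c.1 (c.2 - 1) = w.

(* the link of v (nodes: neighbours of v, edges: corners at v) is a
   single (finite) cycle *)
Definition link_is_cycle (L : cplx) (v : vert L) : Prop :=
  finite_set (corner v) /\
  (forall w : vert L,
      (forall c, corner v c -> ~ cnbr c w) \/
      exists c1 c2, c1 <> c2 /\
        forall c, (corner v c /\ cnbr c w) <-> (c = c1 \/ c = c2)) /\
  (forall c c', corner v c -> corner v c' ->
     clos_refl_trans _
       (fun a b => corner v a /\ corner v b /\ exists w, cnbr a w /\ cnbr b w)
       c c').

(* elementary edge-path homotopies: backtracking, and inserting the
   boundary loop of a face *)
Definition htpy_step (L : cplx) (p q : seq (vert L)) : Prop :=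
  (exists s1 s2 x y, adj x y /\ p = s1 ++ x :: y :: x :: s2 /\ q = s1 ++ x :: s2)
  \/ (exists s1 s2 (t : ftype L) i, face L t /\
        p = s1 ++ t i :: s2 /\
        q = s1 ++ [:: t i; t (i + 1); t (i + 1 + 1); t (i + 1 + 1 + 1);
                      t (i + 1 + 1 + 1 + 1); t i] ++ s2).

Definition connected_cplx (L : cplx) : Prop :=
  forall x y : vert L, is_vert x -> is_vert y ->
    exists s, is_path x s /\ last x s = y.

Definition simply_connected (L : cplx) : Prop :=
  forall (v : vert L) s, is_vert v -> is_path v s -> last v s = v ->
    clos_refl_sym_trans _ (@htpy_step L) (v :: s) [:: v].

(* combinatorial tiling: a 2-dim (regular) CW complex homeomorphic to the
   open disk: faces are simple pentagons, every vertex has a circle as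
   link (surface without boundary), connected, simply connected, and
   non-compact (infinitely many faces). *)
Definition tiling (L : cplx) : Prop :=
  [/\ forall t : ftype L, face L t -> injective t,
      forall v : vert L, is_vert v -> link_is_cycle v,
      connected_cplx L,
      simply_connected L
    & ~ finite_set (face L)].

Definition pverts (L : cplx) (P : set (ftype L)) : set (vert L) :=
  [set x | exists t i, P t /\ t i = x].

(* f, g are mutually inverse bijections between D1 and D2 that map the
   faces of P1 onto the faces of P2 (label-preserving, since a face is a
   labelled tuple) *)
Definition cx_iso (L1 L2 : cplx) (P1 : set (ftype L1)) (P2 : set (ftype L2))
    (D1 : set (vert L1)) (D2 : set (vert L2))
    (f : vert L1 -> vert L2) (g : vert L2 -> vert L1) : Prop :=
  [/\ forall x, D1 x -> D2 (f x) /\ g (f x) = x,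
      forall y, D2 y -> D1 (g y) /\ f (g y) = y,
      forall t, P1 t -> P2 (f \o t)
    & forall s, P2 s -> P1 (g \o s)].

Definition share_edge (L : cplx) (a b : ftype L) : Prop :=
  exists i j : 'I_5, (a i = b j /\ a (i + 1) = b (j + 1)) \/
                     (a i = b (j + 1) /\ a (i + 1) = b j).

Definition patch (L : cplx) (P : set (ftype L)) : Prop :=
  [/\ P `<=` face L, finite_set P &
      forall t s, P t -> P s ->
        clos_refl_trans _ (fun a b => P a /\ P b /\ share_edge a b) t s].

Definition loc_iso (L M : cplx) : Prop :=
  forall P : set (ftype L), patch P ->
  exists Q : set (ftype M), patch Q /\
    exists f g, cx_iso P Q (pverts P) (pverts Q) f g.

Inductive overt (V : Type) :=
| OV of V                       (* old vertex *)
| OM of set V                   (* midpoint of the edge {u,w} *)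
| OC of ('I_5 -> V) & 'I_5.     (* c'_j of a face: OC t j = c_{j+1} *)

Definition midp (V : Type) (t : 'I_5 -> V) (j : 'I_5) : overt V :=
  OM [set x | x = t j \/ x = t (j + 1)].

(* central pentagon: corner labelled k+1 is c_k (paper) = OC t (k-1) *)
Definition central (V : Type) (t : 'I_5 -> V) : 'I_5 -> overt V :=
  fun k => OC t (k - 1).

(* petal j (paper petal i = j+1):  v_i m_i c_i c_{i-1} m_{i-1}
   with labels i, i+1, ..., i+4 *)
Definition petal (V : Type) (t : 'I_5 -> V) (j : 'I_5) : 'I_5 -> overt V :=
  fun k => match nat_of_ord (k - j) with
           | 0 => OV (t j)
           | 1 => midp t j
           | 2 => OC t j
           | 3 => OC t (j - 1)
           | _ => midp t (j - 1)
           end.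

Definition omega (L : cplx) : cplx :=
  @Cplx (overt (vert L))
    [set s | exists t, face L t /\ (s = central t \/ exists j, s = petal t j)].

Definition omap (V W : Type) (f : V -> W) (x : overt V) : overt W :=
  match x with
  | OV v => OV (f v)
  | OM A => OM (f @` A)
  | OC t j => OC (f \o t) j
  end.

Fixpoint Kn (n : nat) : cplx :=
  match n with
  | 0 => @Cplx 'I_5 [set id]
  | m.+1 => omega (Kn m)
  end.

(* K_n embeds onto the central superpentagon of K_{n+1} *)
Fixpoint emb (n : nat) : vert (Kn n) -> vert (Kn n.+1) :=
  match n return vert (Kn n) -> vert (Kn n.+1) with
  | 0 => fun k : 'I_5 => OC (id : 'I_5 -> 'I_5) (k - 1)
  | m.+1 => omap (@emb m)
  end.

Fixpoint up (n k : nat) : vert (Kn n) -> vert (Kn (Nat.add k n)) :=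
  match k return vert (Kn n) -> vert (Kn (Nat.add k n)) with
  | 0 => id
  | k'.+1 => fun x => emb (up k' x)
  end.

Definition Kpt := {n : nat & vert (Kn n)}.

Definition lim_rel (p q : Kpt) : Prop :=
  exists k l : nat,
    existT (fun n => vert (Kn n)) (Nat.add k (projT1 p)) (up k (projT2 p)) =
    existT (fun n => vert (Kn n)) (Nat.add l (projT1 q)) (up l (projT2 q)).

(* vertices of the direct limit: equivalence classes of lim_rel *)
Definition cls (p : Kpt) : set Kpt := [set q | lim_rel p q].

Definition K : cplx :=
  @Cplx (set Kpt)
    [set t | exists n (s : ftype (Kn n)), face (Kn n) s /\
             t = (fun i => cls (existT (fun n => vert (Kn n)) n (s i)))].

Definition ball (L : cplx) (v : vert L) (n : nat) : set (ftype L) :=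
  [set t | face L t /\ forall i, within v n (t i)].

Definition balls_iso (L L' : cplx) (v : vert L) (v' : vert L') (n : nat) : Prop :=
  exists f g, f v = v' /\ g v' = v /\
    cx_iso (ball v n) (ball v' n)
      (pverts (ball v n) `|` [set v]) (pverts (ball v' n) `|` [set v']) f g.

(* d' = min(1/n, 1) for the greatest such n (= 1 when n = 0), and 0 if
   the balls are isomorphic for all n: realised as an infimum *)
Definition dprime (R : realType) (L L' : cplx) (v : vert L) (v' : vert L') : R :=
  inf [set ((maxn n 1)%:R)^-1 | n in [set n | balls_iso v v' n]].

From Pilot Require Import Defs.
From mathcomp Require Import all_boot all_order all_algebra.
From mathcomp Require Import boolp classical_sets cardinality reals.
Import Order.TTheory GRing.Theory Num.Theory.
Local Open Scope classical_set_scope.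
Local Open Scope ring_scope.
Set Implicit Arguments.
Unset Strict Implicit.
Unset Printing Implicit Defensive.

(* Any two corners of a pentagon are at edge distance at most 2, and every face
   of omega(L) lies in the subdivision of a face of L.  Following an edge path
   of omega(L) from the old vertex v, each step stays within subdivisions of
   faces meeting the previous ones, so a vertex at distance m from v in
   omega(L) only lies on subdivisions of faces of L whose corners are within
   2m + 2 of v.  Hence an isomorphism B(v,n,L) -> B(v',n,L') with n >= 2m + 2,
   pushed through the subdivision functorially, restricts to an isomorphism
   B(v,m,omega L) -> B(v',m,omega L'): d'(v,v') < 1/(2m+2) forces
   d'(omega v, omega v') <= 1/m. *)

Lemma ord5_near (i j : 'I_5) :
  [|| j == i, j == i + 1, j == i + 1 + 1, j == i - 1 | j == i - 1 - 1].
Proof.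
case: i => [[|[|[|[|[|?]]]]] ?] //; case: j => [[|[|[|[|[|?]]]]] ?] //.
all: by apply/orP; left; apply/eqP; apply/val_inj.
Qed.

Section EdgeDistance.
Variable L : cplx.

Lemma is_path_cat (x : vert L) s1 s2 :
  is_path x (s1 ++ s2) <-> is_path x s1 /\ is_path (last x s1) s2.
Proof.
elim: s1 x => [|y s1 IH] x /=; first by split => // [[]].
rewrite IH; tauto.
Qed.

Lemma within_trans (v x y : vert L) a b :
  within v a x -> within x b y -> within v (a + b)%N y.
Proof.
move=> [s1 [p1 [h1 l1]]] [s2 [p2 [h2 l2]]]; exists (s1 ++ s2); split.
  by apply/is_path_cat; rewrite l1.
by rewrite size_cat leq_add // last_cat l1.
Qed.

Lemma within_le (v x : vert L) a b :
  within v a x -> (a <= b)%N -> within v b x.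
Proof. by move=> [s [p [h l]]] ab; exists s; rewrite (leq_trans h ab). Qed.

Lemma adj_within1 (x y : vert L) : adj x y -> within x 1 y.
Proof. by move=> xy; exists [:: y]. Qed.

Lemma within0 (v x : vert L) : within v 0 x -> x = v.
Proof. by move=> [[|? ?] [_ [//= _ <-]]]. Qed.

Lemma face_corners_within2 (t : ftype L) i j :
  face L t -> within (t i) 2 (t j).
Proof.
move=> ft.
have succ k : within (t k) 1 (t (k + 1)).
  by apply: adj_within1; exists t, k; split=> //; left.
have pred k : within (t k) 1 (t (k - 1)).
  by apply: adj_within1; exists t, (k - 1); split=> //; right; rewrite subrK.
case/or4P: (ord5_near i j) => [/eqP->|/eqP->|/eqP->|/orP[]/eqP->].
- by exists [::].
- exact: within_le (succ i) _.
- exact: within_trans (succ i) (succ _).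
- exact: within_le (pred i) _.
- exact: within_trans (pred i) (pred _).
Qed.

End EdgeDistance.

Definition subface (V : Type) (t : 'I_5 -> V) (s : 'I_5 -> overt V) : Prop :=
  s = central t \/ exists j, s = petal t j.

Definition in_subdiv (V : Type) (t : 'I_5 -> V) (x : overt V) : Prop :=
  exists k, central t k = x \/ exists j, petal t j k = x.

Lemma subface_in_subdiv (V : Type) (t : 'I_5 -> V) s k :
  subface t s -> in_subdiv t (s k).
Proof. by case=> [->|[j ->]]; exists k; [left|right; exists j]. Qed.

Lemma in_subdivP (V : Type) (t : 'I_5 -> V) x : in_subdiv t x ->
  [\/ exists j, x = OV (t j), exists j, x = midp t j | exists j, x = OC t j].
Proof.
move=> [k [<-|[j <-]]]; first by apply: Or33; exists (k - 1).
by rewrite /petal; case: (nat_of_ord (k - j)) => [|[|[|[|?]]]];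
  [apply: Or31 | apply: Or32 | apply: Or33 | apply: Or33 | apply: Or32]; eauto.
Qed.

Lemma in_subdiv_share_corner (V : Type) (t t' : 'I_5 -> V) x :
  in_subdiv t x -> in_subdiv t' x -> exists a b, t a = t' b.
Proof.
case/in_subdivP=> -[j ->] /in_subdivP[] [j' E]; rewrite /midp in E; try discriminate.
- by case: E => E; exists j, j'.
- case: E => E.
  have : [set y | y = t' j' \/ y = t' (j' + 1)] (t j) by rewrite -E; left.
  by case=> E'; [exists j, j' | exists j, (j' + 1)].
- by case: E => -> _; exists 0, 0.
Qed.

Lemma omega_adj_in_subdiv L (x y : vert (omega L)) : adj x y ->
  exists t, [/\ face L t, in_subdiv t x & in_subdiv t y].
Proof.
move=> [s [i [[t [ft ts]] xy]]]; exists t.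
by case: xy => [[<- <-]|[<- <-]]; split=> //; apply: subface_in_subdiv.
Qed.

Definition subdiv_within L (v : vert L) (d : nat) (x : vert (omega L)) : Prop :=
  forall t : ftype L, face L t -> in_subdiv t x -> forall i, within v d (t i).

Section SubdivWithin.
Variables (L : cplx) (v : vert L).

Lemma subdiv_within_OV : subdiv_within v 2 (OV v).
Proof.
move=> t ft /in_subdivP[] [j] //.
by case=> -> i; apply: face_corners_within2.
Qed.

Lemma subdiv_within_adj d (x y : vert (omega L)) :
  adj x y -> subdiv_within v d x -> subdiv_within v (d + 2) y.
Proof.
case/omega_adj_in_subdiv=> t [ft tx ty] vx t' ft' t'y i.
have [a [b E]] := in_subdiv_share_corner ty t'y.
by apply: within_trans (face_corners_within2 b i ft'); rewrite -E; apply: vx.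
Qed.

Lemma subdiv_within_path p : forall (x : vert (omega L)) d, is_path x p ->
  subdiv_within v d x -> subdiv_within v (d + 2 * size p) (last x p).
Proof.
elim: p => [|y p IH] x d /=; first by rewrite muln0 addn0.
move=> [xy yp] vx; have := IH y _ yp (subdiv_within_adj xy vx).
by rewrite mulnS addnA [(d + 2)%N]addnC.
Qed.

End SubdivWithin.

Lemma image_pair (V W : Type) (f : V -> W) (a b : V) :
  f @` [set x | x = a \/ x = b] = [set y | y = f a \/ y = f b].
Proof.
apply/seteqP; split=> y /=.
- by case=> x [->|->] <-; [left|right].
- by case=> ->; [exists a; first left | exists b; first right].
Qed.

Lemma omap_petal (V W : Type) (f : V -> W) t j k :
  Defs.omap f (petal t j k) = petal (f \o t) j k.
Proof.
rewrite /petal; case: (nat_of_ord (k - j)) => [|[|[|[|?]]]] //=;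
  by rewrite /midp /= image_pair.
Qed.

Lemma omap_subface (V W : Type) (f : V -> W) t s :
  subface t s -> subface (f \o t) (Defs.omap f \o s).
Proof.
case=> [->|[j ->]]; [left|right; exists j]; apply: funext => k //=.
exact: omap_petal.
Qed.

Lemma cx_iso_sym L1 L2 (P1 : set (ftype L1)) (P2 : set (ftype L2)) D1 D2 f g :
  cx_iso P1 P2 D1 D2 f g -> cx_iso P2 P1 D2 D1 g f.
Proof. by case=> *; split. Qed.

Section SubdividedBalls.
Variables (L L' : cplx) (v : vert L) (v' : vert L') (n : nat).
Variables (f : vert L -> vert L') (g : vert L' -> vert L).
Variables (D : set (vert L)) (D' : set (vert L')).
Hypothesis fg_iso : cx_iso (ball v n) (ball v' n) D D' f g.
Hypothesis fv : f v = v'.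
Hypothesis ball_vertsD : pverts (ball v n) `<=` D.

Lemma ball_of_within d t : face L t -> (forall i, within v d (t i)) ->
  (d <= n)%N -> ball v n t.
Proof. by move=> ft tv dn; split=> // i; apply: within_le (tv i) dn. Qed.

Lemma is_path_omap p : forall (x : vert (omega L)) d, is_path x p ->
  subdiv_within v d x -> (d + 2 * size p <= n)%N ->
  is_path (Defs.omap f x : vert (omega L')) (map (Defs.omap f) p).
Proof.
case: fg_iso => _ _ mapP _.
elim: p => [|y p IH] x d //= [xy yp] vx dn.
split; last first.
  apply: IH (subdiv_within_adj xy vx) _ => //.
  by move: dn; rewrite mulnS addnA [(d + 2)%N]addnC.
case: xy => s [i [[t [ft ts]] sxy]].
have tn : ball v n t.
  apply: (@ball_of_within d) => //; last exact: leq_trans (leq_addr _ _) dn.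
  by apply: vx => //; case: sxy => [[<- _]|[_ <-]]; apply: subface_in_subdiv.
exists (Defs.omap f \o s), i; split; first by exists (f \o t); split;
  [case: (mapP _ tn) | apply: omap_subface].
by case: sxy => [[<- <-]|[<- <-]]; [left|right].
Qed.

Lemma ball_omega_omap m : (2 * m + 2 <= n)%N -> forall s,
  ball (OV v : vert (omega L)) m s ->
  ball (OV v' : vert (omega L')) m (Defs.omap f \o s) /\
  forall i, Defs.omap g (Defs.omap f (s i)) = s i.
Proof.
case: (fg_iso) => inv _ mapP _ mn s [[t [ft ts]] sv].
have m2n : (2 + 2 * m <= n)%N by rewrite addnC.
have pathm i : exists p,
    [/\ is_path (OV v : vert (omega L)) p, (size p <= m)%N & last (OV v) p = s i].
  by have [p [? [? ?]]] := sv i; exists p.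
have tn : ball v n t.
  have [p [vp pm s0]] := pathm 0.
  have := subdiv_within_path vp (@subdiv_within_OV _ v).
  rewrite s0 => /(_ t ft (subface_in_subdiv 0 ts)).
  move/(@ball_of_within _ t ft); apply; apply: leq_trans m2n.
  by rewrite leq_add2l leq_mul2l.
have gf : g \o (f \o t) = t.
  apply: funext => k /=.
  have tkD : D (t k) by apply: ball_vertsD; exists t, k.
  by have [_ ->] := inv _ tkD.
split; first split.
- by exists (f \o t); split; [case: (mapP _ tn) | apply: omap_subface].
- move=> i; have [p [vp pm si]] := pathm i.
  exists (map (Defs.omap f) p); rewrite size_map pm /= -si -fv.
  split=> //; last by rewrite (last_map (Defs.omap f) p (OV v)). apply: is_path_omap vp (@subdiv_within_OV _ v) _.
  by apply: leq_trans m2n; rewrite leq_add2l leq_mul2l.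
- move=> i; case: ts => [->|[j ->]]; last by rewrite !omap_petal gf.
  by rewrite /central /= gf.
Qed.

End SubdividedBalls.

Lemma balls_iso_omega L L' (v : vert L) (v' : vert L') n m :
  (2 * m + 2 <= n)%N -> balls_iso v v' n ->
  balls_iso (OV v : vert (omega L)) (OV v' : vert (omega L')) m.
Proof.
move=> mn [f [g [fv [gv fg]]]].
have gf := cx_iso_sym fg.
have ballD (M : cplx) (w : vert M) n' : pverts (ball w n') `<=` pverts (ball w n') `|` [set w].
  by move=> x; left.
have fmap := ball_omega_omap fg fv (ballD _ _ _) mn.
have gmap := ball_omega_omap gf gv (ballD _ _ _) mn.
exists (Defs.omap f), (Defs.omap g); rewrite /= fv gv; do 2!split=> //; split.
- move=> x [[s [i [sv <-]]]|->]; last by split; [right; rewrite /= fv|rewrite /= fv gv].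
  by have [? ?] := fmap s sv; split; [left; exists (Defs.omap f \o s), i|].
- move=> x [[s [i [sv <-]]]|->]; last by split; [right; rewrite /= gv|rewrite /= gv fv].
  by have [? ?] := gmap s sv; split; [left; exists (Defs.omap g \o s), i|].
- by move=> s /fmap[].
- by move=> s /gmap[].
Qed.

(* A face in the ball of radius 0 would have all its corners equal. *)
Lemma balls_iso0 L L' (v : vert L) (v' : vert L') :
  (forall t : ftype L, face L t -> injective t) ->
  (forall t : ftype L', face L' t -> injective t) -> balls_iso v v' 0.
Proof.
move=> injL injL'.
have noball M (w : vert M) : (forall t : ftype M, face M t -> injective t) ->
    forall t, ~ ball w 0 t.
  move=> injM t [ft tw]; have := injM _ ft 0 1.
  by rewrite (within0 (tw 0)) (within0 (tw 1)) => /(_ erefl).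
exists (fun _ => v'), (fun _ => v); do 2!split=> //; split.
- by move=> x [[t [i [/(noball _ _ injL)]]]|->] //; split=> //; right.
- by move=> x [[t [i [/(noball _ _ injL')]]]|->] //; split=> //; right.
- by move=> t /(noball _ _ injL).
- by move=> t /(noball _ _ injL').
Qed.

Section Dprime.
Variables (R : realType) (L L' : cplx) (v : vert L) (v' : vert L').

Lemma dprime_le_inv m : (0 < m)%N -> balls_iso v v' m ->
  dprime R v v' <= (m%:R)^-1.
Proof.
move=> m0 vm; rewrite -[in m%:R](maxn_idPl m0).
apply: ge_inf; last by exists m.
by exists 0 => _ [j _ <-]; rewrite invr_ge0 ler0n.
Qed.

(* The hypothesis [balls_iso v v' 0] makes the set under [inf] nonempty. *)
Lemma dprime_lt_inv N : (0 < N)%N -> balls_iso v v' 0 ->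
  dprime R v v' < (N%:R)^-1 -> exists2 n, (N < n)%N & balls_iso v v' n.
Proof.
move=> N0 v0 /(inf_lt (ex_intro _ _ (ex_intro2 _ _ 0%N v0 erefl))).
move=> [_ [n vn <-]]; rewrite ltf_pV2 ?posrE ?ltr0n ?leq_maxr ?orbT // ltr_nat.
by rewrite leq_max => /orP[Nn|]; [exists n | rewrite ltnNge N0].
Qed.

End Dprime.

Lemma exists_inv_nat_lt (R : archiRealFieldType) (eps : R) : 0 < eps ->
  exists2 m, (0 < m)%N & (m%:R)^-1 < eps.
Proof.
move=> eps0; exists (Num.Def.archi_bound eps^-1).+1 => //.
rewrite invf_plt ?posrE ?ltr0n //.
apply: lt_le_trans (archi_boundP _) _; first by rewrite invr_ge0 ltW.
by rewrite ler_nat.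
Qed.

Theorem theoreml (R : realType) (L : cplx) (v : vert L) :
  tiling L -> loc_iso L K -> is_vert v ->
  forall eps : R, 0 < eps -> exists2 delta : R, 0 < delta &
    forall (L' : cplx) (v' : vert L'),
      tiling L' -> loc_iso L' K -> is_vert v' ->
      dprime R v v' < delta ->
      dprime R (OV v : vert (omega L)) (OV v' : vert (omega L')) < eps.
Proof.
move=> [injL _ _ _ _] _ _ eps eps0.
have [m m0 meps] := exists_inv_nat_lt eps0.
exists ((2 * m + 2)%:R)^-1; first by rewrite invr_gt0 ltr0n addn2.
move=> L' v' [injL' _ _ _ _] _ _ vv'.
have m2_gt0 : (0 < 2 * m + 2)%N by rewrite addn2.
have [n mn vn] := dprime_lt_inv m2_gt0 (balls_iso0 v v' injL injL') vv'.
apply: le_lt_trans meps; apply: dprime_le_inv m0 _.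
exact: balls_iso_omega (ltnW mn) vn.
Qed.
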